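(* Let $M$ be a $*$-left Ehresmann monoid with basis $H$. Then: (i) if $h_1\cdots h_n$ is in $H$-canonical form, then $(h_1\cdots h_n)^*=h_n^*$ and $(h_1\cdots h_n)^+=h_1^+$; (ii) if $h\in H$ and $k\in H\setminus E$, then $h^*\ge k^+$ if and only if $hk\in H$, and in that case $(hk)^*=k^*$.
   Context: A $*$-left Ehresmann monoid is a monoid $M$ with unary operations $+,*$ such that $x^+x=x$, $(x^+y^+)^+=x^+y^+$, $x^+y^+=y^+x^+$, $(xy)^+=(xy^+)^+$, $xx^*=x$, $(x^* )^*=x^*$, $x^*y^*=y^*x^*$, $(xy^* )^*y^*=(xy^* )^*$, $(x^* )^+=x^*$, $(x^+)^*=x^+$. Projections: $E=\{a^+\}=\{a^*\}$, ordered by $e\le f$ iff $ef=e$; $\sigma$ is the least monoid congruence containing $E\times E$. $H\subseteq M$ is atomic if: (H1) $E\subseteq H$; (H2) $h\in H,e\in E$ imply $he\in H$ and $(he)^*=h^*e$; (H3) if $h\in H$, $k\in H\setminus E$, $h^*\ge k^+$ then $hk\in H$ and $(hk)^*=k^*$; (H4) every $m\in M$ is $\sigma$-related to some $h\in H$; (H5) if $h,k,w\in H$, $hk\,\sigma\,w$ and $k^*=w^*$, then some $u\in H$ has $u\,\sigma\,h$ and $u^*\ge k^+$. An expression $m=h_1\cdots h_n$ ($n\ge1$, $h_i\in H$) is in $H$-canonical form if $h_i^*<h_{i+1}^+$ for $1\le i<n$ and $h_i\notin E$ for $2\le i\le n$. $M$ has $H$-canonical forms if every element has exactly one expression in $H$-canonical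 form. $H$ is a basis of $M$ if $H$ generates $M$ as a semigroup, $H$ is atomic and $M$ has $H$-canonical forms. *)

From Stdlib Require Import List.
Import ListNotations.
Set Implicit Arguments.

Record StarLeftEhresmann := {
  car :> Type;
  mul : car -> car -> car;
  one : car;
  plus : car -> car;
  star : car -> car;
  mul_assoc : forall x y z, mul x (mul y z) = mul (mul x y) z;
  mul_1l : forall x, mul one x = x;
  mul_1r : forall x, mul x one = x;
  ax_plus_l : forall x, mul (plus x) x = x;
  ax_plus_idem : forall x y, plus (mul (plus x) (plus y)) = mul (plus x) (plus y);
  ax_plus_comm : forall x y, mul (plus x) (plus y) = mul (plus y) (plus x);
  ax_plus_mul : forall x y, plus (mul x y) = plus (mul x (plus y));
  ax_star_r : forall x, mul x (star x) = x;
  ax_star_star : forall x, star (star x) = star x;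
  ax_star_comm : forall x y, mul (star x) (star y) = mul (star y) (star x);
  ax_star_mul : forall x y, mul (star (mul x (star y))) (star y) = star (mul x (star y));
  ax_plus_of_star : forall x, plus (star x) = star x;
  ax_star_of_plus : forall x, star (plus x) = plus x
}.

Section Defs.
Variable M : StarLeftEhresmann.

Definition isE (x : M) : Prop := exists a : M, x = plus M a.

Definition ple (e f : M) : Prop := mul M e f = e.
Definition plt (e f : M) : Prop := ple e f /\ e <> f.

Definition monoid_congruence (R : M -> M -> Prop) : Prop :=
  (forall x, R x x) /\ (forall x y, R x y -> R y x) /\
  (forall x y z, R x y -> R y z -> R x z) /\
  (forall x y z, R x y -> R (mul M z x) (mul M z y)) /\
  (forall x y z, R x y -> R (mul M x z) (mul M y z)).

Definition sigma (a b : M) : Prop :=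
  forall R : M -> M -> Prop, monoid_congruence R ->
    (forall e f, isE e -> isE f -> R e f) -> R a b.

Definition atomic (H : M -> Prop) : Prop :=
  (forall e, isE e -> H e) /\
  (forall h e, H h -> isE e -> H (mul M h e) /\ star M (mul M h e) = mul M (star M h) e) /\
  (forall h k, H h -> H k -> ~ isE k -> ple (plus M k) (star M h) ->
     H (mul M h k) /\ star M (mul M h k) = star M k) /\
  (forall m, exists h, H h /\ sigma m h) /\
  (forall h k w, H h -> H k -> H w -> sigma (mul M h k) w -> star M k = star M w ->
     exists u, H u /\ sigma u h /\ ple (plus M k) (star M u)).

Fixpoint prod_from (h : M) (t : list M) : M :=
  match t with
  | [] => h
  | k :: t' => mul M h (prod_from k t')
  end.

Fixpoint canon_chain (H : M -> Prop) (h : M) (t : list M) : Prop :=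
  match t with
  | [] => True
  | k :: t' => plt (star M h) (plus M k) /\ H k /\ ~ isE k /\ canon_chain H k t'
  end.

(* the expression h :: t (i.e. h_1 = h, h_2 ... h_n = t) is in H-canonical form *)
Definition canonical (H : M -> Prop) (h : M) (t : list M) : Prop :=
  H h /\ canon_chain H h t.

Definition has_canonical_forms (H : M -> Prop) : Prop :=
  forall m : M,
    (exists h t, canonical H h t /\ prod_from h t = m) /\
    (forall h t h' t', canonical H h t -> prod_from h t = m ->
                       canonical H h' t' -> prod_from h' t' = m ->
                       h = h' /\ t = t').

Definition generates (H : M -> Prop) : Prop :=
  forall m : M, exists h t, H h /\ Forall H t /\ prod_from h t = m.

Definition basis (H : M -> Prop) : Prop :=
  generates H /\ atomic H /\ has_canonical_forms H.

End Defs.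
Arguments isE {M}. Arguments ple {M}. Arguments plt {M}. Arguments sigma {M}.
Arguments atomic {M}. Arguments prod_from {M}. Arguments canon_chain {M}.
Arguments canonical {M}. Arguments has_canonical_forms {M}.
Arguments generates {M}. Arguments basis {M}.

(* Multiplying a canonical expression [k ...] on the left by [x] in [H] gives again
   a canonical expression: [x k] is a single basis element when [k] is a projection
   or [x^* >= k^+], and otherwise [x k = (x f) k] with [f = x^* k^+ < k^+].  Hence
   any product of [n] basis elements has a canonical form with at most [n] factors,
   ending in the same factor when it has exactly [n].  For a canonical [h_1 ... h_n]
   with product [m], doing this to [h_1 ... h_(n-1) (h_n m^* )] must, by uniqueness,
   return the original expression, so [h_n = h_n m^*]; with [m = m h_n^*] this gives
   [m^* = h_n^*].  Likewise, if [h k] lies in [H] although [h^* >= k^+] fails, then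
   [h k] and [(h f) k] are two distinct canonical forms of the same element. *)

From Stdlib Require Import List Lia Classical.
Import ListNotations.
Set Implicit Arguments.
Unset Strict Implicit.

Local Infix "⋅" := (mul _) (at level 40, left associativity).
Local Notation "x ⁺" := (plus _ x) (at level 1, format "x ⁺").
Local Notation "x ∗" := (star _ x) (at level 1, format "x ∗").

Section Projections.
Variable M : StarLeftEhresmann.
Implicit Types x y e f g : M.

Lemma plus_one : (one M)⁺ = one M.
Proof. now rewrite <- (mul_1r M (one M)⁺), ax_plus_l. Qed.

Lemma plus_idem x : x⁺⁺ = x⁺.
Proof. now rewrite <- (mul_1r M x⁺), <- plus_one, ax_plus_idem. Qed.

Lemma isE_plus x : isE x⁺.
Proof. now exists x. Qed.

Lemma isE_star x : isE x∗.
Proof. exists x∗. now rewrite ax_plus_of_star. Qed.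

Lemma plus_proj e : isE e -> e⁺ = e.
Proof. intros [a ->]. apply plus_idem. Qed.

Lemma star_proj e : isE e -> e∗ = e.
Proof. intros [a ->]. apply ax_star_of_plus. Qed.

Lemma proj_idem e : isE e -> e ⋅ e = e.
Proof. intros He. now rewrite <- (plus_proj He) at 1; rewrite ax_plus_l. Qed.

Lemma proj_comm e f : isE e -> isE f -> e ⋅ f = f ⋅ e.
Proof. intros [a ->] [b ->]. apply ax_plus_comm. Qed.

Lemma isE_mul e f : isE e -> isE f -> isE (e ⋅ f).
Proof. intros [a ->] [b ->]. exists (a⁺ ⋅ b⁺). now rewrite ax_plus_idem. Qed.

Lemma ple_mul_l e f : isE f -> ple (e ⋅ f) f.
Proof. intros Hf. unfold ple. now rewrite <- mul_assoc, proj_idem. Qed.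

Lemma ple_antisym e f : isE e -> isE f -> ple e f -> ple f e -> e = f.
Proof. unfold ple. intros He Hf Hef Hfe. now rewrite <- Hef, proj_comm. Qed.

Lemma ple_plt_trans e f g : isE f -> isE g -> ple e f -> plt f g -> plt e g.
Proof.
  unfold plt, ple. intros Hf Hg Hef [Hfg Hne]. split.
  - now rewrite <- Hef, <- mul_assoc, Hfg.
  - intros ->. apply Hne. now rewrite <- Hfg, proj_comm, Hef.
Qed.

Lemma ple_iff_mul_eq x y : ple y⁺ x∗ <-> x∗ ⋅ y⁺ = y⁺.
Proof. unfold ple. now rewrite proj_comm by (apply isE_plus || apply isE_star). Qed.

Lemma mul_proj_of_ple x e : ple x∗ e -> x ⋅ e = x.
Proof.
  unfold ple. intros Hle.
  now rewrite <- (ax_star_r M x) at 1; rewrite <- mul_assoc, Hle, ax_star_r.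
Qed.

Lemma plus_mul_of_ple x y : ple x∗ y⁺ -> (x ⋅ y)⁺ = x⁺.
Proof. intros Hle. now rewrite ax_plus_mul, mul_proj_of_ple. Qed.

Lemma ple_star_of_mul_star x y : x ⋅ y∗ = x -> ple x∗ y∗.
Proof. intros Hx. unfold ple. now rewrite <- Hx at 1 2; apply ax_star_mul. Qed.

Lemma mul_restrict_star x k : x ⋅ (x∗ ⋅ k⁺) ⋅ k = x ⋅ k.
Proof. now rewrite <- !mul_assoc, ax_plus_l, mul_assoc, ax_star_r. Qed.

Lemma prod_from_mul_head x y t : prod_from (x ⋅ y) t = x ⋅ prod_from y t.
Proof. destruct t; simpl; [reflexivity | symmetry; apply mul_assoc]. Qed.

Lemma prod_from_app_mul h y z t :
  prod_from h (t ++ [y]) ⋅ z = prod_from h (t ++ [y ⋅ z]).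
Proof.
  revert h. induction t as [|a t IH]; intro h; simpl.
  - symmetry. apply mul_assoc.
  - now rewrite <- mul_assoc, IH.
Qed.

End Projections.

Lemma last_cons_default (A : Type) (k d : A) s : last (k :: s) d = last s k.
Proof.
  revert k d. induction s as [|c s IH]; intros k d; [reflexivity|].
  change (last (c :: s) d = last (c :: s) k). now rewrite !IH.
Qed.

Section CanonicalForms.
Variable M : StarLeftEhresmann.
Variable H : M -> Prop.
Implicit Types x h k e : M.

Lemma canon_chain_Forall h t : canon_chain H h t -> Forall H t.
Proof.
  revert h. induction t as [|k t IH]; intros h Hc; constructor.
  - apply Hc.
  - destruct Hc as (_ & _ & _ & Hc). exact (IH k Hc).
Qed.

Lemma canon_chain_star_eq h h' t : h∗ = h'∗ -> canon_chain H h t -> canon_chain H h' t.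
Proof. destruct t; simpl; [auto|]. now intros <-. Qed.

Lemma plus_prod_canonical h t : canonical H h t -> (prod_from h t)⁺ = h⁺.
Proof.
  revert h. induction t as [|k t IH]; intros h [_ Hc]; [reflexivity|].
  destruct Hc as ([Hle _] & Hk & _ & Hc). simpl.
  apply plus_mul_of_ple. now rewrite (IH k (conj Hk Hc)).
Qed.

Hypothesis H_mul_proj :
  forall h e, H h -> isE e -> H (h ⋅ e) /\ (h ⋅ e)∗ = h∗ ⋅ e.
Hypothesis H_mul_above :
  forall h k, H h -> H k -> ~ isE k -> ple k⁺ h∗ -> H (h ⋅ k) /\ (h ⋅ k)∗ = k∗.

Lemma canonical_cons_restrict x k s :
  H x -> canonical H k s -> ~ isE k -> x∗ ⋅ k⁺ <> k⁺ ->
  canonical H (x ⋅ (x∗ ⋅ k⁺)) (k :: s).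
Proof.
  intros Hx [Hk Hc] kE Hne.
  assert (fE : isE (x∗ ⋅ k⁺)) by (apply isE_mul; [apply isE_star | apply isE_plus]).
  destruct (H_mul_proj Hx fE) as [Hxf Hstar].
  rewrite (mul_assoc M x∗), proj_idem in Hstar by apply isE_star.
  split; [exact Hxf|]. simpl. rewrite Hstar.
  repeat split; auto. apply ple_mul_l, isE_plus.
Qed.

Lemma canonical_prepend x k s :
  H x -> canonical H k s ->
  exists h' t', canonical H h' t' /\ prod_from h' t' = x ⋅ prod_from k s /\
    length t' <= S (length s) /\ (length t' = S (length s) -> last t' h' = last s k).
Proof.
  intros Hx [Hk Hc].
  destruct (classic (isE k)) as [kE | kE].
  - destruct (H_mul_proj Hx kE) as [Hxk Hstar].
    exists (x ⋅ k), s. repeat split; [exact Hxk | | apply prod_from_mul_head | lia | lia].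
    destruct s as [|k1 s]; [exact I|].
    destruct Hc as (Hlt & Hc). rewrite star_proj in Hlt by exact kE.
    simpl. rewrite Hstar. split; [|exact Hc].
    apply (ple_plt_trans kE (isE_plus k1)); [apply ple_mul_l, kE | exact Hlt].
  - destruct (classic (ple k⁺ x∗)) as [Hle | Hnle].
    + destruct (H_mul_above Hx Hk kE Hle) as [Hxk Hstar].
      exists (x ⋅ k), s. repeat split; [exact Hxk | | apply prod_from_mul_head | lia | lia].
      exact (canon_chain_star_eq (eq_sym Hstar) Hc).
    + rewrite ple_iff_mul_eq in Hnle.
      exists (x ⋅ (x∗ ⋅ k⁺)), (k :: s).
      split; [exact (canonical_cons_restrict Hx (conj Hk Hc) kE Hnle)|].
      split; [simpl; now rewrite <- !prod_from_mul_head, mul_restrict_star|].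
      split; [simpl; lia|].
      intros _. apply last_cons_default.
Qed.

Lemma canonical_of_product x t :
  H x -> Forall H t ->
  exists h' t', canonical H h' t' /\ prod_from h' t' = prod_from x t /\
    length t' <= length t /\ (length t' = length t -> last t' h' = last t x).
Proof.
  revert x. induction t as [|k t IH]; intros x Hx Ht.
  - exists x, []. repeat split; auto.
  - inversion Ht as [|? ? Hk Ht']; subst.
    destruct (IH k Hk Ht') as (k' & s & Hc & Hprod & Hlen & Hlast).
    destruct (canonical_prepend Hx Hc) as (h' & t' & Hc' & Hprod' & Hlen' & Hlast').
    exists h', t'. split; [exact Hc'|].
    split; [simpl; now rewrite Hprod', Hprod|].
    split; [simpl; lia|].
    intros Heq. simpl in Heq.
    rewrite last_cons_default, Hlast' by lia. apply Hlast. lia.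
Qed.

Hypothesis H_canonical_unique :
  forall h t h' t', canonical H h t -> canonical H h' t' ->
    prod_from h t = prod_from h' t' -> h = h' /\ t = t'.

Lemma star_prod_canonical h t : canonical H h t -> (prod_from h t)∗ = (last t h)∗.
Proof.
  intros Hc.
  destruct t as [|k t] using rev_ind; [reflexivity|]. clear IHt.
  rewrite last_last.
  set (m := prod_from h (t ++ [k])).
  assert (Hm : prod_from h (t ++ [k ⋅ m∗]) = m) by (now rewrite <- prod_from_app_mul, ax_star_r).
  destruct Hc as [Hh Hchain].
  destruct (proj1 (Forall_app _ _ _) (canon_chain_Forall Hchain)) as [Ht Hk].
  apply Forall_inv in Hk.
  destruct (H_mul_proj Hk (isE_star m)) as [Hkm Hstar].
  assert (Hts' : Forall H (t ++ [k ⋅ m∗])) by (apply Forall_app; auto).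
  destruct (canonical_of_product Hh Hts') as (h' & t' & Hc' & Hprod & _ & Hlast).
  destruct (H_canonical_unique (conj Hh Hchain) Hc' (eq_trans (eq_sym Hm) (eq_sym Hprod)))
    as [<- <-].
  rewrite !last_last, !length_app in Hlast. specialize (Hlast eq_refl).
  (* [m = m k^*] gives [m^* <= k^*], and [k = k m^*] gives [k^* <= m^*]. *)
  apply ple_antisym; [apply isE_star | apply isE_star | |].
  - apply ple_star_of_mul_star. unfold m. now rewrite prod_from_app_mul, ax_star_r.
  - unfold ple. now rewrite <- Hstar, <- Hlast.
Qed.

Lemma H_mul_iff_ple h k :
  H h -> H k -> ~ isE k -> ple k⁺ h∗ <-> H (h ⋅ k).
Proof.
  intros Hh Hk kE. split; [intros Hle; now apply H_mul_above|].
  intros Hhk. apply NNPP. rewrite ple_iff_mul_eq. intros Hne.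
  pose proof (canonical_cons_restrict (s := []) Hh (conj Hk I) kE Hne) as Hc.
  assert (Hc0 : canonical H (h ⋅ k) []) by (split; [exact Hhk | exact I]).
  destruct (H_canonical_unique Hc Hc0 (mul_restrict_star h k)) as [_ Habs].
  discriminate.
Qed.

End CanonicalForms.

Theorem mainTheorem11 (M : StarLeftEhresmann) (H : M -> Prop) :
  basis H ->
  (forall (h : M) (t : list M), canonical H h t ->
      star M (prod_from h t) = star M (last t h) /\
      plus M (prod_from h t) = plus M h) /\
  (forall h k : M, H h -> H k -> ~ isE k ->
      (ple (plus M k) (star M h) <-> H (mul M h k)) /\
      (ple (plus M k) (star M h) -> star M (mul M h k) = star M k)).
Proof.
  intros (_ & (_ & H_mul_proj & H_mul_above & _) & Hcf).
  assert (H_unique : forall h t h' t', canonical H h t -> canonical H h' t' ->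
            prod_from h t = prod_from h' t' -> h = h' /\ t = t')
    by (intros h t h' t' Hc Hc' Heq; exact (proj2 (Hcf _) h t h' t' Hc eq_refl Hc' (eq_sym Heq))).
  split.
  - intros h t Hc. split.
    + exact (star_prod_canonical H_mul_proj H_mul_above H_unique Hc).
    + exact (plus_prod_canonical Hc).
  - intros h k Hh Hk kE. split.
    + exact (H_mul_iff_ple H_mul_proj H_mul_above H_unique Hh Hk kE).
    + intros Hle. exact (proj2 (H_mul_above h k Hh Hk kE Hle)).
Qed.
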